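(* Let $(\mathcal H,\Delta,\delta,\mu,\mathbf 1,S,\beta)$ be a braided Hopf algebra and let $K:\mathcal H\otimes\mathcal H\to\mathbb C$ be a $\beta$-invariant linear functional. Put $\widetilde K:=K\circ(S\otimes\mathrm{id})\circ\Delta:\mathcal H\to\mathbb C$. If $K\star\mu=\mu\star K$, then $\widetilde K\star\mathrm{id}=\mathrm{id}\star\widetilde K$, i.e. $(\widetilde K\otimes\mathrm{id})\circ\Delta=(\mathrm{id}\otimes\widetilde K)\circ\Delta$ as maps $\mathcal H\to\mathcal H$.
   Context: Braided vector space $(V,\beta)$: $\beta\in\mathrm{Aut}(V\otimes V)$ satisfying the braid equation $(\beta\otimes\mathrm{id})(\mathrm{id}\otimes\beta)(\beta\otimes\mathrm{id})=(\mathrm{id}\otimes\beta)(\beta\otimes\mathrm{id})(\mathrm{id}\otimes\beta)$. $\beta_{m,n}$: $\beta_{0,0}=\mathrm{id}_{\mathbb C}$, $\beta_{1,0}=\beta_{0,1}=\mathrm{id}_V$, $\beta_{1,m+1}=(\mathrm{id}_V\otimes\beta_{1,m})(\beta\otimes\mathrm{id})$, $\beta_{n+1,m}=(\beta_{n,m}\otimes\mathrm{id}_V)(\mathrm{id}\otimes\beta_{1,m})$. $f:V^{\otimes m}\to V^{\otimes n}$ is $\beta$-invariant if $(f\otimes\mathrm{id})\beta_{1,m}=\beta_{1,n}(\mathrm{id}\otimes f)$, $\beta^{-1}$-invariant if $(\mathrm{id}\otimes f)\beta_{m,1}=\beta_{n,1}(f\otimes\mathrm{id})$, $\beta$-compatible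 if both; for a functional $K$ on $V\otimes V$, $\beta$-invariance means $(K\otimes\mathrm{id})\circ\beta_{1,2}=\mathrm{id}\otimes K$. A braided bialgebra $(\mathcal H,\Delta,\delta,\mu,\mathbf 1,\beta)$: unital associative algebra and coassociative counital coalgebra with braiding $\beta$ such that $\mu,\mathbf 1,\Delta,\delta$ are $\beta$-compatible, $\Delta\circ\mu=(\mu\otimes\mu)\circ\Lambda$ with $\Lambda:=(\mathrm{id}\otimes\beta\otimes\mathrm{id})(\Delta\otimes\Delta)$, $\Delta(\mathbf 1)=\mathbf 1\otimes\mathbf 1$, $\delta\circ\mu=\delta\otimes\delta$, $\delta(\mathbf 1)=1$. It is a braided Hopf algebra if there is a linear $S:\mathcal H\to\mathcal H$ with $\mu\circ(S\otimes\mathrm{id})\circ\Delta=\mathbf 1\delta=\mu\circ(\mathrm{id}\otimes S)\circ\Delta$. Convolution: $f\star g=m\circ(f\otimes g)\circ\Delta_{\mathrm{coalg}}$; on $\mathcal H\otimes\mathcal H$ the comultiplication is $\Lambda$, so $K\star\mu=(K\otimes\mu)\circ\Lambda$ and $\mu\star K=(\mu\otimes K)\circ\Lambda$ (identifying $\mathbb C\otimes\mathcal H\cong\mathcal H$). *)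

From HB Require Import structures.
From mathcomp Require Import all_boot all_algebra.
Set Implicit Arguments. Unset Strict Implicit. Unset Printing Implicit Defensive.
Import GRing.Theory.
Local Open Scope ring_scope.

(* Every vector space over the field R has a basis; we fix the vector space *)
(* H to be the free vector space on an (arbitrary) basis type I.  Then the  *)
(* tensor power H^{(x)k} is the free vector space on k-sequences of I,      *)
(* e_{i1} (x) ... (x) e_{ik}  <->  [:: i1; ...; ik]   (k = 0 gives R).      *)
(* An element of a tensor power is a finite formal linear combination       *)
(* (tens); two of them are equal iff all their coefficients (coef) agree.   *)
(* A linear map H^{(x)m} -> H^{(x)n} is given by its values on the basis    *)
(* tensors (lmap); [typed m n f] says these values lie in H^{(x)n}, and     *)
(* [leqm m f g] is equality of linear maps with domain H^{(x)m}.            *)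
Section Tensor.
Variables (R : fieldType) (I : eqType).

Definition tens := seq (R * seq I).
Definition lmap := seq I -> tens.

Definition coef (v : tens) (u : seq I) : R := \sum_(p <- v | p.2 == u) p.1.

Definition lid : lmap := fun w => [:: (1, w)].

Definition lapp (f : lmap) (v : tens) : tens :=
  flatten [seq [seq (p.1 * q.1, q.2) | q <- f p.2] | p <- v].

Definition lcomp (g f : lmap) : lmap := fun w => lapp g (f w).

(* tensor product f (x) g, where f has domain H^{(x)m} *)
Definition ltens (m : nat) (f g : lmap) : lmap :=
  fun w => [seq (p.1 * q.1, p.2 ++ q.2) | p <- f (take m w), q <- g (drop m w)].

Definition leqm (m : nat) (f g : lmap) : Prop :=
  forall w : seq I, size w = m -> forall u : seq I, coef (f w) u = coef (g w) u.

Definition typed (m n : nat) (f : lmap) : Prop :=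
  forall w : seq I, size w = m -> all (fun q => size q.2 == n) (f w).

Variable b : lmap.

Fixpoint beta1m (m : nat) : lmap :=
  match m with
  | 0 => lid
  | m'.+1 => lcomp (ltens 1 lid (beta1m m')) (ltens 2 b lid)
  end.

Fixpoint betan1 (n : nat) : lmap :=
  match n with
  | 0 => lid
  | n'.+1 => lcomp (ltens n'.+1 (betan1 n') lid) (ltens n' lid (beta1m 1))
  end.

Definition beta_inv (m n : nat) (f : lmap) : Prop :=
  leqm (1 + m) (lcomp (ltens m f lid) (beta1m m)) (lcomp (beta1m n) (ltens 1 lid f)).

Definition betainv_inv (m n : nat) (f : lmap) : Prop :=
  leqm (m + 1) (lcomp (ltens 1 lid f) (betan1 m)) (lcomp (betan1 n) (ltens m f lid)).

Definition beta_compat (m n : nat) (f : lmap) : Prop :=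
  beta_inv m n f /\ betainv_inv m n f.

Definition braided_vs : Prop :=
  [/\ typed 2 2 b,
      (exists2 bi : lmap, typed 2 2 bi &
         leqm 2 (lcomp b bi) lid /\ leqm 2 (lcomp bi b) lid) &
      leqm 3 (lcomp (ltens 2 b lid) (lcomp (ltens 1 lid b) (ltens 2 b lid)))
             (lcomp (ltens 1 lid b) (lcomp (ltens 2 b lid) (ltens 1 lid b)))].

Definition Lambda (Delta : lmap) : lmap :=
  lcomp (ltens 1 lid (ltens 2 b lid)) (ltens 1 Delta Delta).

Definition braided_bialgebra (Delta delta mu one : lmap) : Prop :=
  braided_vs /\
  [/\ [/\ typed 1 2 Delta, typed 1 0 delta, typed 2 1 mu & typed 0 1 one],
      [/\ leqm 3 (lcomp mu (ltens 2 mu lid)) (lcomp mu (ltens 1 lid mu)),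
          leqm 1 (lcomp mu (ltens 0 one lid)) lid &
          leqm 1 (lcomp mu (ltens 1 lid one)) lid],
      [/\ leqm 1 (lcomp (ltens 1 Delta lid) Delta) (lcomp (ltens 1 lid Delta) Delta),
          leqm 1 (lcomp (ltens 1 delta lid) Delta) lid &
          leqm 1 (lcomp (ltens 1 lid delta) Delta) lid],
      [/\ beta_compat 2 1 mu, beta_compat 0 1 one,
          beta_compat 1 2 Delta & beta_compat 1 0 delta] &
      [/\ leqm 2 (lcomp Delta mu) (lcomp (ltens 2 mu mu) (Lambda Delta)),
          leqm 0 (lcomp Delta one) (ltens 0 one one),
          leqm 2 (lcomp delta mu) (ltens 1 delta delta) &
          leqm 0 (lcomp delta one) lid]].

Definition is_antipode (Delta delta mu one S : lmap) : Prop :=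
  [/\ typed 1 1 S,
      leqm 1 (lcomp mu (lcomp (ltens 1 S lid) Delta)) (lcomp one delta) &
      leqm 1 (lcomp mu (lcomp (ltens 1 lid S) Delta)) (lcomp one delta)].

Definition braided_hopf (Delta delta mu one S : lmap) : Prop :=
  braided_bialgebra Delta delta mu one /\ is_antipode Delta delta mu one S.

End Tensor.

From Pilot Require Import Defs.
From HB Require Import structures.
From mathcomp Require Import all_boot all_algebra.
From mathcomp Require Import zify.
From Stdlib Require Import Setoid Morphisms.
Set Implicit Arguments. Unset Strict Implicit. Unset Printing Implicit Defensive.
Import GRing.Theory.

(* 1. the braided anti-comultiplicativity of the antipode,
        Delta o S = beta o (S (x) S) o Delta,
      by the convolution-inverse argument: in the convolution algebra of maps
      H -> H (x) H (product of the braided algebra H (x) H), both sides are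
      inverses of Delta, hence P = P*(Delta*G) = (P*Delta)*G = G;
   2. the main identity: expanding both sides of Kt (x) id o Delta and
      id (x) Kt o Delta by the antipode axiom, the commutation relation
      K * mu = mu * K turns one expansion into the other, using 1. and the
      beta-invariance of K to move the braiding past K. *)

Section TensorCalculus.
Local Open Scope ring_scope.
Variables (R : fieldType) (I : eqType).
Local Notation tens := (tens R I).
Local Notation lmap := (lmap R I).
Local Notation coef := (@coef R I).
Local Notation lapp := (@lapp R I).
Local Notation lid := (@lid R I).

Definition teq (v v' : tens) := forall u, coef v u = coef v' u.

Lemma eq_teq v v' : v = v' -> teq v v'. Proof. by move=> ->. Qed.
Lemma teq_refl v : teq v v. Proof. by []. Qed.
Lemma teq_sym v v' : teq v v' -> teq v' v. Proof. by move=> e u; rewrite e. Qed.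
Lemma teq_trans v1 v2 v3 : teq v1 v2 -> teq v2 v3 -> teq v1 v3.
Proof. by move=> e1 e2 u; rewrite e1 e2. Qed.

Lemma teq_compat a b a' b' : teq a b -> a = a' -> b = b' -> teq a' b'.
Proof. by move=> e <- <-. Qed.

(* Freezing the right-hand side, so that rewrites only affect the left one. *)
Lemma teq_lhs a b : (forall x, x = b -> teq a x) -> teq a b.
Proof. by move=> h; apply: h. Qed.

Lemma coefE v u : coef v u = \sum_(p <- v) (if p.2 == u then p.1 else 0).
Proof. by rewrite /Defs.coef big_mkcond. Qed.

Lemma coef_lapp (f : lmap) v u :
  coef (lapp f v) u = \sum_(p <- v) p.1 * coef (f p.2) u.
Proof.
rewrite coefE /Defs.lapp big_flatten big_map; apply: eq_bigr => p _.
rewrite coefE big_map mulr_sumr; apply: eq_bigr => q _ /=.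
by case: ifP; rewrite ?mulr0.
Qed.

Lemma coef_neq0_mem v s : coef v s != 0 -> s \in [seq p.2 | p <- v].
Proof.
apply: contraR => ns; rewrite coefE big1_seq // => p /andP[_ pv].
case: eqP => // e; case/negP: ns; rewrite -e; exact: map_f.
Qed.

Lemma sum_neq0 (T : eqType) (r : seq T) (F : T -> R) : \sum_(x <- r) F x != 0 ->
  exists2 x, x \in r & F x != 0.
Proof.
move=> nz; case: (boolP (has (fun x => F x != 0) r)) => [/hasP[x xr Fx]|].
  by exists x.
move/hasPn => h; case/negP: nz; apply/eqP; rewrite big1_seq // => x /andP[_ xr].
by move: (h x xr); rewrite negbK => /eqP.
Qed.

(* A sum over the terms of v regrouped by basis word: it only depends on the
   coefficients of v, which is what makes [lapp] well defined on vectors. *)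
Lemma sum_by_support (v : tens) (F : seq I -> R) (X : seq (seq I)) :
  uniq X -> {subset [seq p.2 | p <- v] <= X} ->
  \sum_(p <- v) p.1 * F p.2 = \sum_(s <- X) coef v s * F s.
Proof.
move=> uX sub.
transitivity (\sum_(s <- X) \sum_(p <- v) (if p.2 == s then p.1 else 0) * F s).
  rewrite exchange_big; apply: eq_big_seq => p pv.
  rewrite (bigD1_seq p.2) //=; last by apply: sub; exact: map_f.
  rewrite eqxx big1 ?addr0 // => s ns; by rewrite eq_sym (negbTE ns) mul0r.
by apply: eq_bigr => s _; rewrite coefE mulr_suml.
Qed.

Lemma lapp_teq (f : lmap) v v' : teq v v' -> teq (lapp f v) (lapp f v').
Proof.
move=> e u; rewrite !coef_lapp.
set X := undup ([seq p.2 | p <- v] ++ [seq p.2 | p <- v']).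
rewrite (@sum_by_support v (fun s => coef (f s) u) X) ?undup_uniq //; last first.
  by move=> s hs; rewrite mem_undup mem_cat hs.
rewrite (@sum_by_support v' (fun s => coef (f s) u) X) ?undup_uniq //; last first.
  by move=> s hs; rewrite mem_undup mem_cat hs orbT.
by apply: eq_bigr => s _; rewrite e.
Qed.

(* [supp_ge N v]: every basis word in the support of v has length >= N, so
   that maps acting on the first N factors of v are meaningful. *)
Definition supp_ge (N : nat) (v : tens) := forall s, coef v s != 0 -> (N <= size s)%N.

Lemma supp_ge_le N N' v : supp_ge N v -> (N' <= N)%N -> supp_ge N' v.
Proof. by move=> b h s /b; lia. Qed.

Lemma supp_ge_lid n (w : seq I) : size w = n -> supp_ge n (lid w).
Proof.
move=> sw s; rewrite /Defs.lid coefE big_cons big_nil addr0 /=.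
by case: (w =P s) => [<- _|]; rewrite ?eqxx // sw.
Qed.

Lemma lapp_ext_supp N (f g : lmap) v : supp_ge N v ->
  (forall s, (N <= size s)%N -> teq (f s) (g s)) -> teq (lapp f v) (lapp g v).
Proof.
move=> bv efg u; rewrite !coef_lapp.
set X := undup [seq p.2 | p <- v].
rewrite (@sum_by_support v (fun s => coef (f s) u) X) ?undup_uniq //; last first.
  by move=> s hs; rewrite mem_undup.
rewrite (@sum_by_support v (fun s => coef (g s) u) X) ?undup_uniq //; last first.
  by move=> s hs; rewrite mem_undup.
apply: eq_bigr => s _; have [->|nz] := eqVneq (coef v s) 0; first by rewrite !mul0r.
by rewrite efg // bv.
Qed.

Lemma lapp_eq_fun (f g : lmap) v : (forall s, f s = g s) -> lapp f v = lapp g v.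
Proof. by move=> e; rewrite /Defs.lapp; congr flatten; apply: eq_map => p; rewrite e. Qed.

Lemma lapp_comp (f g : lmap) v : teq (lapp g (lapp f v)) (lapp (lcomp g f) v).
Proof.
move=> u; rewrite !coef_lapp /Defs.lapp big_flatten big_map; apply: eq_bigr => p _.
rewrite big_map coef_lapp mulr_sumr; apply: eq_bigr => q _ /=; by rewrite mulrA.
Qed.

Lemma lapp_lid v : teq (lapp lid v) v.
Proof.
move=> u; rewrite coef_lapp coefE; apply: eq_bigr => p _.
rewrite /Defs.lid coefE big_cons big_nil addr0 /=.
by case: ifP; rewrite ?mulr1 ?mulr0.
Qed.

Lemma map_as_lapp (h : seq I -> seq I) (t : tens) :
  [seq (q.1, h q.2) | q <- t] = lapp (fun s => [:: (1, h s)]) t.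
Proof. by elim: t => //= q t IH; rewrite IH /Defs.lapp /= mulr1. Qed.

Lemma teq_flatten_swap (P Q : tens) (h : seq I -> seq I -> seq I) :
  teq (flatten [seq [seq (p.1 * q.1, h p.2 q.2) | q <- Q] | p <- P])
      (flatten [seq [seq (q.1 * p.1, h p.2 q.2) | p <- P] | q <- Q]).
Proof.
move=> u; rewrite !coefE !big_flatten !big_map.
under eq_bigr => p _ do rewrite big_map.
under [RHS]eq_bigr => q _ do rewrite big_map.
rewrite exchange_big /=; apply: eq_bigr => q _; apply: eq_bigr => p _; by rewrite mulrC.
Qed.

Lemma take_catD (T : Type) (A B : seq T) a n :
  size A = a -> take (a + n) (A ++ B) = A ++ take n B.
Proof. by move=> <-; rewrite take_cat ltnNge leq_addr /= addKn. Qed.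
Lemma drop_catD (T : Type) (A B : seq T) a n :
  size A = a -> drop (a + n) (A ++ B) = drop n B.
Proof. by move=> <-; rewrite drop_cat ltnNge leq_addr /= addKn. Qed.
Lemma drop_catl (T : Type) (A B : seq T) n :
  (n <= size A)%N -> drop n (A ++ B) = drop n A ++ B.
Proof.
move=> h; rewrite drop_cat; case: ltnP => h' //.
have e : n = size A by lia.
by rewrite e subnn drop0 drop_size.
Qed.
Lemma dropD (T : Type) (s : seq T) a b : drop (a + b) s = drop b (drop a s).
Proof. by rewrite drop_drop addnC. Qed.

(* [at_pos k m f] is id^{(x)k} (x) f (x) id, f acting on the factors k..k+m-1,
   and [ap k m f v] its linear extension applied to v. *)
Definition at_pos (k m : nat) (f : lmap) : lmap := fun w =>
  [seq (q.1, take k w ++ q.2 ++ drop (k + m) w) | q <- f (take m (drop k w))].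
Definition ap k m (f : lmap) v := lapp (at_pos k m f) v.

Lemma supp_ge_ap N N' k m n (f : lmap) v : supp_ge N v -> typed m n f ->
  (k + m <= N)%N -> (N' <= N + n - m)%N -> supp_ge N' (ap k m f v).
Proof.
move=> bv tf km NN s; rewrite coef_lapp.
rewrite (@sum_by_support v (fun t => coef (at_pos k m f t) s)
          (undup [seq p.2 | p <- v])) ?undup_uniq //;
  last by move=> t; rewrite mem_undup.
case/sum_neq0 => t _; rewrite mulf_eq0 negb_or => /andP[nzv nza].
have st := bv _ nzv.
move/coef_neq0_mem: nza => /mapP[q /mapP[q' qin ->] ->] /=.
have sz : size (take m (drop k t)) = m by rewrite size_takel // size_drop; lia.
move/allP: (tf _ sz) => /(_ _ qin) /eqP sq.
rewrite !size_cat sq size_takel ?size_drop; lia.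
Qed.

Lemma supp_ge_ap_exact N k m n (f : lmap) v : supp_ge N v -> typed m n f ->
  (k + m <= N)%N -> supp_ge (N + n - m) (ap k m f v).
Proof. move=> bv tf h; exact: (supp_ge_ap bv tf h (leqnn _)). Qed.

Lemma ap_teq k m (f : lmap) v v' : teq v v' -> teq (ap k m f v) (ap k m f v').
Proof. exact: lapp_teq. Qed.

Lemma ap_leqm k m (f g : lmap) v : supp_ge (m + k) v -> leqm m f g ->
  teq (ap k m f v) (ap k m g v).
Proof.
move=> bv e; apply: (lapp_ext_supp bv) => s hs.
rewrite /at_pos !(map_as_lapp (fun x => take k s ++ x ++ drop (k + m) s)).
apply: lapp_teq; apply: e; rewrite size_takel // size_drop; lia.
Qed.

Lemma ap_lid k m v : teq (ap k m lid v) v.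
Proof.
rewrite /ap (@lapp_eq_fun _ lid); first exact: lapp_lid.
by move=> s; rewrite /at_pos /Defs.lid /= dropD !cat_take_drop.
Qed.

Lemma ap_comp k m n (f g : lmap) v : typed m n f -> supp_ge (k + m) v ->
  teq (ap k m (lcomp g f) v) (ap k n g (ap k m f v)).
Proof.
move=> tf bv; apply: teq_sym; apply: teq_trans; first exact: lapp_comp.
apply: (lapp_ext_supp bv) => s hs.
have sA : size (take k s) = k by rewrite size_takel //; lia.
have sx : size (take m (drop k s)) = m by rewrite size_takel // size_drop; lia.
move/allP: (tf _ sx) => tq.
rewrite /lcomp /at_pos /Defs.lcomp /Defs.lapp map_flatten -!map_comp.
apply: eq_teq; congr flatten; apply/eq_in_map => q /tq /eqP sq /=.
rewrite (take_size_cat _ sA) (drop_size_cat _ sA) (take_size_cat _ sq) -!map_comp.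
rewrite dropD (drop_size_cat _ sA) (drop_size_cat _ sq); apply: eq_map => r /=; done.
Qed.

Lemma ap_tens_fst k m1 m2 n1 (f g : lmap) v : typed m1 n1 f ->
  supp_ge (k + m1 + m2) v ->
  teq (ap k (m1 + m2) (ltens m1 f g) v) (ap (k + n1) m2 g (ap k m1 f v)).
Proof.
move=> tf bv; apply: teq_sym; apply: teq_trans; first exact: lapp_comp.
apply: (lapp_ext_supp bv) => s hs.
have sA : size (take k s) = k by rewrite size_takel //; lia.
have sx : size (take m1 (drop k s)) = m1 by rewrite size_takel // size_drop; lia.
move/allP: (tf _ sx) => tq.
have e1 : take m1 (take (m1 + m2) (drop k s)) = take m1 (drop k s).
  by rewrite take_takel // leq_addr.
have e2 : drop m1 (take (m1 + m2) (drop k s)) = take m2 (drop (k + m1) s).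
  by rewrite dropD (take_drop m2 m1) (addnC m2).
rewrite /lcomp /at_pos /Defs.lcomp /Defs.ltens /Defs.lapp e1 e2 /= map_flatten -!map_comp.
apply: eq_teq; congr flatten; apply/eq_in_map => q /tq /eqP sq /=.
rewrite (take_catD _ _ sA) (take_size_cat _ sq) (drop_catD _ _ sA).
rewrite (drop_size_cat _ sq) -!map_comp.
rewrite -addnA (drop_catD _ _ sA) dropD (drop_size_cat _ sq).
apply: eq_map => r /=; by rewrite -!catA addnA (dropD _ (k + m1)).
Qed.

Lemma ap_tens_snd k m1 m2 (f g : lmap) v : supp_ge (k + m1 + m2) v ->
  teq (ap k (m1 + m2) (ltens m1 f g) v) (ap k m1 f (ap (k + m1) m2 g v)).
Proof.
move=> bv; apply: teq_sym; apply: teq_trans; first exact: lapp_comp.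
apply: (lapp_ext_supp bv) => s hs.
have sB : size (take (k + m1) s) = k + m1 by rewrite size_takel //; lia.
have e1 : take m1 (take (m1 + m2) (drop k s)) = take m1 (drop k s).
  by rewrite take_takel // leq_addr.
have e2 : drop m1 (take (m1 + m2) (drop k s)) = take m2 (drop (k + m1) s).
  by rewrite dropD (take_drop m2 m1) (addnC m2).
have e3 : take k (take (k + m1) s) = take k s by rewrite take_takel // leq_addr.
have e4 : drop k (take (k + m1) s) = take m1 (drop k s).
  by rewrite (take_drop m1 k) addnC.
have sD : size (drop k (take (k + m1) s)) = m1 by rewrite size_drop sB; lia.
rewrite /lcomp /at_pos /Defs.lcomp /Defs.ltens /Defs.lapp e1 e2 /= map_flatten -!map_comp.
set Q := g _; set P := f _.
pose H := fun x y => take k s ++ (x ++ y) ++ drop (k + (m1 + m2)) s.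
apply: (@teq_trans _ (flatten [seq [seq (q.1 * p.1, H p.2 q.2) | p <- P] | q <- Q])).
  apply: eq_teq; congr flatten; apply/eq_in_map => q _ /=.
  have dk Y : drop k (take (k+m1) s ++ Y) = drop k (take (k+m1) s) ++ Y.
    by rewrite drop_catl // sB leq_addr.
  have dkm Y : drop (k+m1) (take (k+m1) s ++ Y) = Y by rewrite (drop_size_cat _ sB).
  have tk Y : take k (take (k+m1) s ++ Y) = take k s.
    by rewrite takel_cat ?e3 // sB leq_addr.
  rewrite tk dk dkm (take_size_cat _ sD) e4 -map_comp.
  apply: eq_map => p /=; by rewrite /H -!catA addnA (dropD _ (k + m1)).
apply: teq_trans; first exact: (teq_sym (teq_flatten_swap P Q H)).
apply: eq_teq; congr flatten; apply/eq_in_map => p _ /=.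
by rewrite -map_comp.
Qed.

Lemma typed_lid n : typed n n lid.
Proof. by move=> w sw; rewrite /Defs.lid /= sw eqxx. Qed.

Lemma ap_swap i j j' m1 n1 m2 (f g : lmap) v : typed m1 n1 f -> (i + m1 <= j)%N ->
  j' = (j + n1 - m1)%N -> supp_ge (j + m2) v ->
  teq (ap i m1 f (ap j m2 g v)) (ap j' m2 g (ap i m1 f v)).
Proof.
move=> tf hij -> bv.
have [d ed] : exists d, j = (i + m1 + d)%N by exists (j - (i + m1))%N; lia.
subst j.
have -> : (i + m1 + d + n1 - m1 = i + n1 + d)%N by lia.
have e1 : teq (ap (i + m1 + d) m2 g v) (ap (i + m1) (d + m2) (ltens d lid g) v).
  apply: teq_trans; first by apply: ap_teq; exact: (teq_sym (@ap_lid (i + m1) d v)).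
  apply: teq_sym; exact: (@ap_tens_fst (i + m1) d m2 d lid g v (@typed_lid d) bv).
apply: teq_trans; first exact: (ap_teq _ _ _ e1).
have bv' : supp_ge (i + m1 + (d + m2)) v by rewrite addnA.
apply: teq_trans.
  exact: (teq_sym (@ap_tens_snd i m1 (d + m2) f (ltens d lid g) v bv')).
apply: teq_trans; first exact: (@ap_tens_fst i m1 (d + m2) n1 f (ltens d lid g) v tf bv').
apply: teq_trans; first apply: (@ap_tens_fst (i + n1) d m2 d lid g _ (@typed_lid d)).
  by apply: (supp_ge_ap bv tf); lia.
apply: ap_teq; exact: ap_lid.
Qed.

Lemma typed_lcomp m n p (f g : lmap) : typed m n f -> typed n p g -> typed m p (lcomp g f).
Proof.
move=> tf tg w sw; apply/allP => r; rewrite /Defs.lcomp /Defs.lapp.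
case/flattenP => l /mapP[q qin ->] /mapP[r' r'in ->] /=.
move/allP: (tf w sw) => /(_ q qin) /eqP sq.
by move/allP: (tg _ sq) => /(_ r' r'in).
Qed.

Lemma typed_ltens m1 n1 m2 n2 (f g : lmap) : typed m1 n1 f -> typed m2 n2 g ->
  typed (m1 + m2) (n1 + n2) (ltens m1 f g).
Proof.
move=> tf tg w sw; apply/allP => r; rewrite /Defs.ltens /=.
case/flattenP => l /mapP[p pin ->] /mapP[q qin ->] /=.
have s1 : size (take m1 w) = m1 by rewrite size_takel // sw leq_addr.
have s2 : size (drop m1 w) = m2 by rewrite size_drop sw addKn.
rewrite size_cat; move/allP: (tf _ s1) => /(_ p pin) /eqP ->.
by move/allP: (tg _ s2) => /(_ q qin) /eqP ->.
Qed.

Lemma typed_ltens_sub m m1 n1 n2 (f g : lmap) : typed m1 n1 f ->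
  typed (m - m1) n2 g -> (m1 <= m)%N -> typed m (n1 + n2) (ltens m1 f g).
Proof.
move=> tf tg h; have -> : m = (m1 + (m - m1))%N by lia.
exact: typed_ltens.
Qed.

Lemma ap_tens_fst_sub k m m1 n1 (f g : lmap) v : typed m1 n1 f -> (m1 <= m)%N ->
  supp_ge (k + m) v ->
  teq (ap k m (ltens m1 f g) v) (ap (k + n1) (m - m1) g (ap k m1 f v)).
Proof.
move=> tf h bv; have e : m = (m1 + (m - m1))%N by lia.
rewrite {1}e; apply: ap_tens_fst => //; by rewrite -addnA -e.
Qed.

Lemma ap0_lid m (F : lmap) (w : seq I) : size w = m -> teq (ap 0 m F (lid w)) (F w).
Proof.
move=> sw u; rewrite /ap coef_lapp /Defs.lid big_cons big_nil addr0 /= mul1r.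
have h : (size w <= m)%N by rewrite sw.
rewrite /at_pos take0 drop0 add0n (drop_oversize h) (take_oversize h) /=.
congr coef; by elim: (F w) => //= [[a c] l ->]; rewrite cats0.
Qed.
End TensorCalculus.

#[global] Instance teq_Equiv (R : fieldType) (I : eqType) : Equivalence (@teq R I).
Proof. split; [exact: teq_refl | exact: teq_sym | exact: teq_trans]. Qed.
#[global] Instance ap_Proper (R : fieldType) (I : eqType) k m f :
  Proper (@teq R I ==> @teq R I) (ap k m f).
Proof. move=> v v' e; exact: ap_teq. Qed.
Arguments ap_swap [R I i j j' m1 n1 m2 f g v].

(* Routine side conditions of the calculus: arities of composite maps and
   lower bounds on the word lengths in the support of a tensor. *)
Ltac solve_typed := solve [ repeat (first [ eassumption
  | (eapply typed_ltens_sub; [ | | lia]) | eapply typed_lcomp | eapply typed_lid ]) ].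
Ltac solve_supp := match goal with
 | |- supp_ge ?N (ap _ _ _ _) => tryif is_evar N
     then (eapply supp_ge_ap_exact; [solve_supp | solve_typed | lia])
     else (eapply supp_ge_ap; [solve_supp | solve_typed | lia | lia])
 | |- supp_ge _ _ => first [eassumption | eapply supp_ge_le; [eassumption | lia]]
 end.

(* Unfold composites and tensor products of maps acting in a hypothesis into
   nested positional actions of the basic maps. *)
Ltac expand_in e := repeat (first [ rewrite ap_lid in e
  | (rewrite ap_comp in e; [ | solve_typed | solve_supp ])
  | (rewrite ap_tens_fst_sub in e; [ | solve_typed | lia | solve_supp ]) ]).

(* Close a goal that agrees with a hypothesis up to arithmetic on positions. *)
Ltac ap_eq := repeat (first [reflexivity
  | match goal with |- @eq nat _ _ => lia | |- _ => f_equal end]).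
Ltac ap_exact e := (apply: (teq_compat e); ap_eq).

Section BraidedHopf.
Variables (R : fieldType) (I : eqType) (b Delta delta mu one S K : lmap R I).
Local Notation lid := (@lid R I).
Hypotheses (tb : typed 2 2 b) (tD : typed 1 2 Delta) (td : typed 1 0 delta)
  (tm : typed 2 1 mu) (t1 : typed 0 1 one) (tS : typed 1 1 S) (tK : typed 2 0 K).
Hypothesis Hassoc : leqm 3 (lcomp mu (ltens 2 mu lid)) (lcomp mu (ltens 1 lid mu)).
Hypothesis Hunitl : leqm 1 (lcomp mu (ltens 0 one lid)) lid.
Hypothesis Hunitr : leqm 1 (lcomp mu (ltens 1 lid one)) lid.
Hypothesis Hcoass :
  leqm 1 (lcomp (ltens 1 Delta lid) Delta) (lcomp (ltens 1 lid Delta) Delta).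
Hypothesis Hcounl : leqm 1 (lcomp (ltens 1 delta lid) Delta) lid.
Hypothesis Hcounr : leqm 1 (lcomp (ltens 1 lid delta) Delta) lid.
Hypothesis Hbmu : beta_compat b 2 1 mu.
Hypothesis Hbone : beta_compat b 0 1 one.
Hypothesis Hdmu : leqm 2 (lcomp Delta mu) (lcomp (ltens 2 mu mu) (Lambda b Delta)).
Hypothesis Hdone : leqm 0 (lcomp Delta one) (ltens 0 one one).
Hypothesis HantiL : leqm 1 (lcomp mu (lcomp (ltens 1 S lid) Delta)) (lcomp one delta).
Hypothesis HantiR : leqm 1 (lcomp mu (lcomp (ltens 1 lid S) Delta)) (lcomp one delta).
Hypothesis HKinv : leqm 3 (lcomp (ltens 2 K lid) (beta1m b 2)) (ltens 1 lid K).
Hypothesis HKcomm : leqm 2 (lcomp (ltens 2 K mu) (Lambda b Delta))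
                           (lcomp (ltens 2 mu K) (Lambda b Delta)).

Lemma beta1m0E : beta1m b 0 = lid. Proof. by []. Qed.
Lemma beta1m1E : beta1m b 1 = lcomp (ltens 1 lid lid) (ltens 2 b lid). Proof. by []. Qed.
Lemma beta1m2E : beta1m b 2 = lcomp (ltens 1 lid (beta1m b 1)) (ltens 2 b lid).
Proof. by []. Qed.
Lemma betan10E : betan1 b 0 = lid. Proof. by []. Qed.
Lemma betan11E :
  betan1 b 1 = lcomp (ltens 1 (betan1 b 0) lid) (ltens 0 lid (beta1m b 1)).
Proof. by []. Qed.
Lemma betan12E :
  betan1 b 2 = lcomp (ltens 2 (betan1 b 1) lid) (ltens 1 lid (beta1m b 1)).
Proof. by []. Qed.
Lemma LambdaE :
  Lambda b Delta = lcomp (ltens 1 lid (ltens 2 b lid)) (ltens 1 Delta Delta).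
Proof. by []. Qed.

(* Turn an equation of maps on H^{(x)n} into its positional form. *)
Ltac unfold_braids e :=
  rewrite ?beta1m2E ?betan12E ?betan11E ?beta1m1E ?beta1m0E ?betan10E ?LambdaE in e.
Ltac positional H n := let e := fresh "e" in let bv := fresh "bv" in
  move=> bv; pose proof (@ap_leqm R I _ n _ _ _ bv H) as e;
  unfold_braids e; expand_in e; ap_exact e.

Implicit Types (v : tens R I) (k : nat).

Lemma mu_assoc_at k v : supp_ge (3 + k) v ->
  teq (ap k 2 mu (ap k 2 mu v)) (ap k 2 mu (ap (1+k) 2 mu v)).
Proof. positional Hassoc 3%N. Qed.
Lemma mu_unitl_at k v : supp_ge (1 + k) v -> teq (ap k 2 mu (ap k 0 one v)) v.
Proof. positional Hunitl 1%N. Qed.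
Lemma mu_unitr_at k v : supp_ge (1 + k) v -> teq (ap k 2 mu (ap (1+k) 0 one v)) v.
Proof. positional Hunitr 1%N. Qed.
Lemma coassoc_at k v : supp_ge (1 + k) v ->
  teq (ap k 1 Delta (ap k 1 Delta v)) (ap (1+k) 1 Delta (ap k 1 Delta v)).
Proof. positional Hcoass 1%N. Qed.
Lemma counitl_at k v : supp_ge (1 + k) v -> teq (ap k 1 delta (ap k 1 Delta v)) v.
Proof. positional Hcounl 1%N. Qed.
Lemma counitr_at k v : supp_ge (1 + k) v -> teq (ap (1+k) 1 delta (ap k 1 Delta v)) v.
Proof. positional Hcounr 1%N. Qed.
Lemma mu_braid_at k v : supp_ge (3 + k) v ->
  teq (ap k 2 mu (ap (1+k) 2 b (ap k 2 b v))) (ap k 2 b (ap (1+k) 2 mu v)).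
Proof. case: Hbmu => H _; positional H 3%N. Qed.
Lemma mu_braidinv_at k v : supp_ge (3 + k) v ->
  teq (ap (1+k) 2 mu (ap k 2 b (ap (1+k) 2 b v))) (ap k 2 b (ap k 2 mu v)).
Proof. case: Hbmu => _ H; positional H 3%N. Qed.
Lemma one_braid_at k v : supp_ge (1 + k) v ->
  teq (ap k 0 one v) (ap k 2 b (ap (1+k) 0 one v)).
Proof. case: Hbone => H _; positional H 1%N. Qed.
Lemma one_braidinv_at k v : supp_ge (1 + k) v ->
  teq (ap (1+k) 0 one v) (ap k 2 b (ap k 0 one v)).
Proof. case: Hbone => _ H; positional H 1%N. Qed.
Lemma Delta_mu_at k v : supp_ge (2 + k) v -> teq (ap k 1 Delta (ap k 2 mu v))
  (ap (1+k) 2 mu (ap k 2 mu (ap (1+k) 2 b (ap (2+k) 1 Delta (ap k 1 Delta v))))).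
Proof. positional Hdmu 2%N. Qed.
Lemma Delta_one_at k v : supp_ge (0 + k) v ->
  teq (ap k 1 Delta (ap k 0 one v)) (ap (1+k) 0 one (ap k 0 one v)).
Proof. positional Hdone 0%N. Qed.
Lemma antipodeL_at k v : supp_ge (1 + k) v ->
  teq (ap k 2 mu (ap k 1 S (ap k 1 Delta v))) (ap k 0 one (ap k 1 delta v)).
Proof. positional HantiL 1%N. Qed.
Lemma antipodeR_at k v : supp_ge (1 + k) v ->
  teq (ap k 2 mu (ap (1+k) 1 S (ap k 1 Delta v))) (ap k 0 one (ap k 1 delta v)).
Proof. positional HantiR 1%N. Qed.
Lemma K_braid_at k v : supp_ge (3 + k) v ->
  teq (ap k 2 K (ap (1+k) 2 b (ap k 2 b v))) (ap (1+k) 2 K v).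
Proof. positional HKinv 3%N. Qed.
Lemma K_conv_comm_at k v : supp_ge (2 + k) v ->
  teq (ap k 2 mu (ap k 2 K (ap (1+k) 2 b (ap (2+k) 1 Delta (ap k 1 Delta v)))))
      (ap (1+k) 2 K (ap k 2 mu (ap (1+k) 2 b (ap (2+k) 1 Delta (ap k 1 Delta v))))).
Proof. positional HKcomm 2%N. Qed.

(* Rewriting with a positional rule ([rw]), right to left ([rwr]), and with the
   interchange law for f at position i and g at position j ([sw], [swr]); the
   side conditions are discharged by the routine tactics. *)
Tactic Notation "rw" open_constr(l) := rewrite l; try solve_typed; try solve_supp; try lia.
Tactic Notation "rwr" open_constr(l) := rewrite -l; try solve_typed; try solve_supp; try lia.
Tactic Notation "sw" constr(f) constr(g) constr(i) constr(j) constr(j') :=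
  rw (ap_swap (R:=R) (I:=I) (f:=f) (g:=g) (i:=i) (j:=j) (j':=j')).
Tactic Notation "swr" constr(f) constr(g) constr(i) constr(j) constr(j') :=
  rwr (ap_swap (R:=R) (I:=I) (f:=f) (g:=g) (i:=i) (j:=j) (j':=j')).
Ltac lhs_only := apply: teq_lhs => ? ->.

(* At position k:
   [mul2_at] is the product (mu (x) mu)(id (x) beta (x) id) of the braided
   algebra H (x) H, [unit2_at] = (1 (x) 1) o delta is the convolution unit, and
   the convolution of F and G is mul2 o (F (x) G) o Delta.  The two candidate
   inverses of Delta are [DeltaS_at] = Delta o S and
   [SSbraid_at] = beta o (S (x) S) o Delta. *)
Definition mul2_at k v := ap (1+k) 2 mu (ap k 2 mu (ap (1+k) 2 b v)).
Definition Delta_at k v := ap k 1 Delta v.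
Definition DeltaS_at k v := ap k 1 Delta (ap k 1 S v).
Definition SSbraid_at k v := ap k 2 b (ap (1+k) 1 S (ap k 1 S (ap k 1 Delta v))).
Definition unit2_at k v := ap (1+k) 0 one (ap k 0 one (ap k 1 delta v)).

#[local] Instance mul2_at_Proper k : Proper (@teq R I ==> @teq R I) (mul2_at k).
Proof. by move=> x y e; rewrite /mul2_at e. Qed.
#[local] Instance DeltaS_at_Proper k : Proper (@teq R I ==> @teq R I) (DeltaS_at k).
Proof. by move=> x y e; rewrite /DeltaS_at e. Qed.

Lemma conv_Delta_SSbraid k v : supp_ge (1 + k) v ->
  teq (mul2_at k (Delta_at k (SSbraid_at (1+k) (ap k 1 Delta v)))) (unit2_at k v).
Proof.
move=> bv; rewrite /mul2_at /Delta_at /SSbraid_at /unit2_at.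
sw Delta b k (1+k) (2+k).
sw Delta S k (2+k) (3+k).
sw Delta S k (1+k) (2+k).
sw Delta Delta k (1+k) (2+k).
swr mu mu k (2+k) (1+k).
rw (mu_braidinv_at (k:=1+k)).
rw (coassoc_at (k:=k)).
rwr (coassoc_at (k:=1+k)).
sw mu S (1+k) (3+k) (2+k).
rw (antipodeR_at (k:=1+k)).
rw (counitl_at (k:=1+k)).
swr one S (1+k) (1+k) (2+k).
rwr (one_braidinv_at (k:=1+k)).
sw mu one k (2+k) (1+k).
rw (antipodeR_at (k:=k)).
reflexivity.
Qed.

(* (Delta o S) * Delta = unit, because Delta is multiplicative. *)
Lemma conv_DeltaS_Delta k v : supp_ge (1 + k) v ->
  teq (mul2_at k (DeltaS_at k (Delta_at (1+k) (ap k 1 Delta v)))) (unit2_at k v).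
Proof.
move=> bv; rewrite /mul2_at /DeltaS_at /Delta_at /unit2_at.
sw S Delta k (1+k) (1+k).
sw Delta Delta k (1+k) (2+k).
rwr (Delta_mu_at (k:=k)).
rw (antipodeL_at (k:=k)).
rw (Delta_one_at (k:=k)).
reflexivity.
Qed.

Lemma conv_unit_SSbraid k v : supp_ge (1 + k) v ->
  teq (mul2_at k (unit2_at k (SSbraid_at (1+k) (ap k 1 Delta v)))) (SSbraid_at k v).
Proof.
move=> bv; rewrite /mul2_at /unit2_at /SSbraid_at.
sw delta b k (1+k) k.
sw delta S k (2+k) (1+k).
sw delta S k (1+k) k.
sw delta Delta k (1+k) k.
rw (counitl_at (k:=k)).
rwr (one_braidinv_at (k:=1+k)).
sw mu one k (2+k) (1+k).
rw (mu_unitl_at (k:=k)).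
rw (mu_unitl_at (k:=1+k)).
reflexivity.
Qed.

Lemma conv_DeltaS_unit k v : supp_ge (1 + k) v ->
  teq (mul2_at k (DeltaS_at k (unit2_at (1+k) (ap k 1 Delta v)))) (DeltaS_at k v).
Proof.
move=> bv; rewrite /mul2_at /DeltaS_at /unit2_at.
rw (counitr_at (k:=k)).
sw S one k (2+k) (2+k).
sw S one k (1+k) (1+k).
sw Delta one k (2+k) (3+k).
sw Delta one k (1+k) (2+k).
sw b one (1+k) (3+k) (3+k).
rwr (one_braid_at (k:=1+k)).
sw mu one k (3+k) (2+k).
rw (mu_unitr_at (k:=k)).
rw (mu_unitr_at (k:=1+k)).
reflexivity.
Qed.

Lemma mul2_assoc_at k v : supp_ge (6 + k) v ->
  teq (mul2_at k (mul2_at (2+k) v)) (mul2_at k (mul2_at k v)).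
Proof.
move=> bv; rewrite /mul2_at.
transitivity (ap (1+k) 2 mu (ap (1+k) 2 mu (ap k 2 mu (ap k 2 mu
                (ap (2+k) 2 b (ap (3+k) 2 b (ap (1+k) 2 b v))))))).
  lhs_only.
  swr mu mu (2+k) (4+k) (3+k).
  rwr (mu_braid_at (k:=1+k)).
  sw b mu (1+k) (4+k) (4+k).
  sw b mu (2+k) (4+k) (4+k).
  sw b b (1+k) (3+k) (3+k).
  rwr (mu_assoc_at (k:=k)).
  sw mu mu k (4+k) (3+k).
  sw mu mu k (3+k) (2+k).
  rwr (mu_assoc_at (k:=1+k)).
  reflexivity.
symmetry; lhs_only.
rwr (ap_swap (R:=R) (I:=I) (f:=mu) (g:=mu) (i:=k) (j:=2+k) (j':=1+k)
       (v:=ap (1+k) 2 b v)).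
swr mu b k (2+k) (1+k).
rwr (mu_braidinv_at (k:=2+k)).
sw mu mu k (3+k) (2+k).
sw mu mu k (2+k) (1+k).
reflexivity.
Qed.

(* Associativity of convolution, for the three maps Delta o S, Delta and
   beta o (S (x) S) o Delta: it reduces to coassociativity and [mul2_assoc_at]. *)
Lemma conv_assoc_at k v : supp_ge (1 + k) v ->
  teq (mul2_at k (DeltaS_at k (mul2_at (1+k) (Delta_at (1+k)
         (SSbraid_at (2+k) (ap (1+k) 1 Delta (ap k 1 Delta v)))))))
      (mul2_at k (mul2_at k (DeltaS_at k (Delta_at (1+k)
         (ap k 1 Delta (SSbraid_at (1+k) (ap k 1 Delta v))))))).
Proof.
move=> bv.
set W := ap k 1 Delta (ap k 1 S (ap (1+k) 1 Delta (ap (2+k) 2 b (ap (3+k) 1 S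
           (ap (2+k) 1 S (ap (2+k) 1 Delta (ap (1+k) 1 Delta (ap k 1 Delta v)))))))).
have bW : supp_ge (6 + k) W by rewrite /W; solve_supp.
transitivity (mul2_at k (mul2_at (2+k) W)).
  rewrite /mul2_at /DeltaS_at /Delta_at /SSbraid_at; lhs_only.
  sw S mu k (2+k) (2+k).
  sw S mu k (1+k) (1+k).
  sw S b k (2+k) (2+k).
  sw Delta mu k (2+k) (3+k).
  sw Delta mu k (1+k) (2+k).
  sw Delta b k (2+k) (3+k).
  reflexivity.
rewrite (mul2_assoc_at bW) /mul2_at /DeltaS_at /Delta_at /SSbraid_at.
symmetry; lhs_only.
sw Delta b k (1+k) (2+k).
sw Delta S k (2+k) (3+k).
sw Delta S k (1+k) (2+k).
sw Delta Delta k (1+k) (2+k).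
rw (coassoc_at (k:=k)).
reflexivity.
Qed.

(* The antipode is a braided anti-coalgebra map: Delta o S = beta o (S (x) S) o
   Delta, as both are convolution inverses of Delta:
   P = P * e = P * (Delta * G) = (P * Delta) * G = e * G = G. *)
Lemma Delta_antipode k v : supp_ge (1 + k) v ->
  teq (ap k 1 Delta (ap k 1 S v)) (ap k 2 b (ap (1+k) 1 S (ap k 1 S (ap k 1 Delta v)))).
Proof.
move=> bv; change (teq (DeltaS_at k v) (SSbraid_at k v)).
have bD : supp_ge (2 + k) (ap k 1 Delta v) by solve_supp.
have bG : supp_ge (1 + k) (SSbraid_at (1 + k) (ap k 1 Delta v)).
  by rewrite /SSbraid_at; solve_supp.
rewrite -(conv_DeltaS_unit bv) -(conv_Delta_SSbraid (k := 1 + k) bD).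
rewrite (conv_assoc_at bv) (conv_DeltaS_Delta bG).
exact: (conv_unit_SSbraid bv).
Qed.

(* Both sides of the theorem are expanded around the common tensor
   X = b_2 Delta_3 Delta_1 S_1 Delta_1 Delta_0 v (subscripts are positions):
   Kt (x) id o Delta becomes mu_0 mu_1 K_1 X.  The proof inserts the antipode
   relation, rewrites Delta o S by [Delta_antipode] and moves the braiding
   past K by its beta-invariance. *)
Lemma Kt_left_expand v : supp_ge 1 v ->
  teq (ap 0 2 mu (ap 1 2 mu (ap 1 2 K (ap 2 2 b (ap 3 1 Delta (ap 1 1 Delta
         (ap 1 1 S (ap 1 1 Delta (ap 0 1 Delta v)))))))))
      (ap 0 2 K (ap 0 1 S (ap 0 1 Delta (ap 0 1 Delta v)))).
Proof.
move=> bv; lhs_only.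
rw (Delta_antipode (k:=1)).
swr b Delta 1 3 3.
rw (K_braid_at (k:=1)).
rwr (mu_assoc_at (k:=0)).
sw mu K 0 2 1.
sw mu Delta 0 3 2.
sw mu S 0 2 1.
rw (coassoc_at (k:=1)).
rwr (coassoc_at (k:=0)).
sw S Delta 1 2 2.
sw mu Delta 0 2 1.
rw (antipodeR_at (k:=0)).
swr one Delta 0 0 1.
swr one S 0 0 1.
swr one Delta 0 1 2.
swr one K 0 0 1.
rw (mu_unitl_at (k:=0)).
rw (counitl_at (k:=0)).
swr S Delta 0 1 1.
rwr (coassoc_at (k:=0)).
reflexivity.
Qed.

(* Symmetrically, id (x) Kt o Delta becomes mu_0 K_2 mu_1 X, using the
   beta-invariance of mu instead. *)
Lemma Kt_right_expand v : supp_ge 1 v ->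
  teq (ap 0 2 mu (ap 2 2 K (ap 1 2 mu (ap 2 2 b (ap 3 1 Delta (ap 1 1 Delta
         (ap 1 1 S (ap 1 1 Delta (ap 0 1 Delta v)))))))))
      (ap 1 2 K (ap 1 1 S (ap 1 1 Delta (ap 0 1 Delta v)))).
Proof.
move=> bv; lhs_only.
rw (Delta_antipode (k:=1)).
swr b Delta 1 3 3.
rw (mu_braid_at (k:=1)).
swr S Delta 2 3 3.
swr S Delta 1 3 3.
rw (coassoc_at (k:=1)).
rwr (coassoc_at (k:=2)).
sw S Delta 1 2 2.
sw S Delta 1 2 2.
rw (antipodeL_at (k:=2)).
rw (counitl_at (k:=2)).
rwr (one_braid_at (k:=1)).
swr one K 1 1 2.
rw (mu_unitr_at (k:=0)).
reflexivity.
Qed.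

(* K * mu = mu * K at position 1 turns mu_1 K_1 X into K_2 mu_1 X, which
   identifies the two expansions: the theorem in positional form. *)
Lemma Kt_conv_comm v : supp_ge 1 v ->
  teq (ap 0 2 K (ap 0 1 S (ap 0 1 Delta (ap 0 1 Delta v))))
      (ap 1 2 K (ap 1 1 S (ap 1 1 Delta (ap 0 1 Delta v)))).
Proof.
move=> bv; rewrite -(Kt_left_expand bv) -(Kt_right_expand bv).
rw (K_conv_comm_at (k:=1)).
reflexivity.
Qed.

Lemma Kt_cocomm_word (w : seq I) : size w = 1 ->
  teq (lcomp (ltens 1 (lcomp K (lcomp (ltens 1 S lid) Delta)) lid) Delta w)
      (lcomp (ltens 1 lid (lcomp K (lcomp (ltens 1 S lid) Delta))) Delta w).
Proof.
move=> sw; have bw : supp_ge 1 (lid w) := supp_ge_lid sw.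
have eL := ap0_lid (lcomp (ltens 1 (lcomp K (lcomp (ltens 1 S lid) Delta)) lid) Delta) sw.
have eR := ap0_lid (lcomp (ltens 1 lid (lcomp K (lcomp (ltens 1 S lid) Delta))) Delta) sw.
expand_in eL; expand_in eR.
rewrite -eL -eR.
apply: (teq_compat (Kt_conv_comm bw)); ap_eq.
Qed.
End BraidedHopf.

Theorem mainTheorem3 (R : fieldType) (I : eqType)
    (b Delta delta mu one S K : lmap R I) :
  braided_hopf b Delta delta mu one S ->
  typed 2 0 K ->
  (* K is a beta-invariant functional: (K (x) id) o beta_{1,2} = id (x) K *)
  leqm 3 (lcomp (ltens 2 K (@lid R I)) (beta1m b 2)) (ltens 1 (@lid R I) K) ->
  (* K * mu = mu * K  (convolution w.r.t. Lambda, C (x) H = H = H (x) C) *)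
  leqm 2 (lcomp (ltens 2 K mu) (Lambda b Delta))
         (lcomp (ltens 2 mu K) (Lambda b Delta)) ->
  let Kt := lcomp K (lcomp (ltens 1 S (@lid R I)) Delta) in
  leqm 1 (lcomp (ltens 1 Kt (@lid R I)) Delta)
         (lcomp (ltens 1 (@lid R I) Kt) Delta).
Proof.
move=> [[[tb _ _] [[tD td tm t1] [Hassoc Hunitl Hunitr] [Hcoass Hcounl Hcounr]
          [Hbmu Hbone _ _] [Hdmu Hdone _ _]]] [tS HantiL HantiR]] tK HKinv HKcomm.
move=> Kt w sw; apply: Kt_cocomm_word; eassumption.
Qed.
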